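(* Let $n \ge 3$ be odd, let $f \in S_{1,1}(n)$ and let $g \in S_{0,0}(n)$. Then: (i) $\psi(f) \in S_{0,0}(n)$ if $\sigma_f = 1$, and $\psi(f) \in S_{0,1}(n)$ if $\sigma_f = 0$; (ii) $\psi^{-1}(f) \in S_{0,0}(n)$ if $\sigma_f = 0$, and $\psi^{-1}(f) \in S_{1,0}(n)$ if $\sigma_f = 1$; (iii) $\psi(g) \in S_{1,1}(n)$ if $\sigma_g = 1$, and $\psi(g) \in S_{1,0}(n)$ if $\sigma_g = 0$; (iv) $\psi^{-1}(g) \in S_{1,1}(n)$ if $\sigma_g = 0$, and $\psi^{-1}(g) \in S_{0,1}(n)$ if $\sigma_g = 1$.
   Context: For $n \ge 2$, let $\mathcal{I}_n$ be the set of all irreducible polynomials of degree $n$ in $\mathbb{F}_2[x]$. Every $f \in \mathcal{I}_n$ is monic with constant term $1$; write $f = x^n + f_{n-1}x^{n-1} + \cdots + f_1 x + 1$ with $f_k \in \mathbb{F}_2$. For $i,j \in \mathbb{F}_2$, $S_{i,j}(n)$ denotes the set of $f \in \mathcal{I}_n$ with $f_{n-1} = i$ and $f_1 = j$. Define $\psi : \mathcal{I}_n \to \mathcal{I}_n$ by $\psi(f)(x) = (x+1)^n f\!\left(\frac{1}{x+1}\right)$, with inverse $\psi^{-1}(f)(x) = x^n f\!\left(\frac{x+1}{x}\right)$. The signature of $f \in \mathcal{I}_n$ is $\sigma_f = \sum_{k=2}^{n-2} k f_k \pmod 2 \in \mathbb{F}_2$. *)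

From mathcomp Require Import all_boot all_algebra.
Set Implicit Arguments. Unset Strict Implicit. Unset Printing Implicit Defensive.
Import GRing.Theory.
Local Open Scope ring_scope.

Notation F2 := 'F_2.

Definition irredn (n : nat) (f : {poly F2}) : Prop :=
  [/\ irreducible_poly f, size f = n.+1 & f \is monic].

Definition S_ij (i j : F2) (n : nat) (f : {poly F2}) : Prop :=
  irredn n f /\ f`_(n.-1) = i /\ f`_1 = j.

(* psi(f)(x) = (x+1)^n f(1/(x+1)) = sum_k f_k (x+1)^(n-k) *)
Definition psi (n : nat) (f : {poly F2}) : {poly F2} :=
  \sum_(k < n.+1) f`_k *: ('X + 1) ^+ (n - k).

(* psi^{-1}(f)(x) = x^n f((x+1)/x) = sum_k f_k (x+1)^k x^(n-k) *)
Definition psi_inv (n : nat) (f : {poly F2}) : {poly F2} :=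
  \sum_(k < n.+1) f`_k *: (('X + 1) ^+ k * 'X ^+ (n - k)).

Definition sigma (n : nat) (f : {poly F2}) : F2 :=
  \sum_(2 <= k < n.-1) f`_k *+ k.

From HB Require Import structures.
From mathcomp Require Import all_boot all_algebra zify.
Import GRing.Theory.
Set Implicit Arguments.
Unset Strict Implicit.
Unset Printing Implicit Defensive.

Local Open Scope ring_scope.

(* With [recip n p = x^n p(1/x)], psi f = (recip n f)(x + 1) and
   psi^-1 f = recip n (f(x + 1)).  An irreducible f of degree n >= 2 has
   f(0) = f(1) = 1, so both maps preserve irreducibility and degree, and over
   F_2 every nonzero polynomial is monic.  Reversal swaps the coefficients of
   x^j and x^(n-j), while the coefficients of x and x^(n-1) in g(x + 1) are
   sum_k k g_k and g_(n-1) + n g_n.  For odd n the weights n-1 and n reduce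
   to 0 and 1, so sum_k k f_k = f_1 + sigma_f + 1, and the four coefficients
   of psi f and psi^-1 f become affine expressions in f_1, f_(n-1), sigma_f. *)

Lemma comp_polyE_wide (R : nzRingType) n (p q : {poly R}) : (size p <= n)%N ->
  p \Po q = \sum_(i < n) p`_i *: q ^+ i.
Proof.
move=> sp; rewrite comp_polyE (big_ord_widen n (fun i => p`_i *: q ^+ i)) //.
rewrite big_mkcond; apply: eq_bigr => i _; case: ltnP => // /(nth_default 0) ->.
by rewrite scale0r.
Qed.

Section Reciprocal.
Variable R : comNzRingType.
Implicit Types p q : {poly R}.

Definition recip m p := \poly_(i < m.+1) p`_(m - i).

Lemma coef_recip m p i : (recip m p)`_i = if (i <= m)%N then p`_(m - i) else 0.
Proof. by rewrite coef_poly ltnS. Qed.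

Lemma recipZ m c p : recip m (c *: p) = c *: recip m p.
Proof.
by apply/polyP => i; rewrite coefZ !coef_recip coefZ; case: leqP; rewrite ?mulr0.
Qed.

Lemma recipD m p q : recip m (p + q) = recip m p + recip m q.
Proof.
by apply/polyP => i; rewrite coefD !coef_recip coefD; case: leqP; rewrite ?addr0.
Qed.

HB.instance Definition _ m := GRing.isSemilinear.Build R {poly R} {poly R} _
  (recip m) (recipZ m, recipD m).

Lemma recipE m p : recip m p = \sum_(i < m.+1) p`_i *: 'X^(m - i).
Proof.
rewrite /recip poly_def (reindex_inj rev_ord_inj); apply: eq_bigr => i _ /=.
by rewrite subSS subKn // -ltnS.
Qed.

Lemma recipK m p : (size p <= m.+1)%N -> recip m (recip m p) = p.
Proof.
move=> sp; apply/polyP => i; rewrite !coef_recip leq_subr.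
case: leqP => [im | mi]; first by rewrite subKn.
by rewrite nth_default // (leq_trans sp).
Qed.

Lemma size_recip m p : p`_0 != 0 -> size (recip m p) = m.+1.
Proof. by move=> p0; rewrite size_poly_eq //= subnn. Qed.

Lemma size_recip_leq m p : (size (recip m p) <= m.+1)%N.
Proof. exact: size_poly. Qed.

Lemma coef0_recip m p : size p = m.+1 -> (recip m p)`_0 = lead_coef p.
Proof. by move=> sp; rewrite coef_recip subn0 lead_coefE sp. Qed.

Lemma recip_XnM a b i q : (i <= a)%N -> (size q <= b.+1)%N ->
  recip (a + b) ('X^i * q) = 'X^(a - i) * recip b q.
Proof.
move=> ia sq; apply/polyP => k; rewrite coef_recip !coefXnM coef_recip.
have q_small j : (b < j)%N -> q`_j = 0 by move=> bj; rewrite nth_default // (leq_trans sq).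
case: (ltnP k (a - i)) => [ka | ak].
  by rewrite ifT ?ifF ?q_small //; lia.
case: (leqP (k - (a - i)) b) => kb.
  by rewrite ifT ?ifF; try lia; congr (_`_ _); lia.
by case: ifP => // kab; rewrite ifT //; lia.
Qed.

Lemma recipM a b p q : (size p <= a.+1)%N -> (size q <= b.+1)%N ->
  recip (a + b) (p * q) = recip a p * recip b q.
Proof.
move=> sp sq; rewrite [recip a p]recipE mulr_suml -{1}[p]comp_polyXr.
rewrite (comp_polyE_wide 'X sp) mulr_suml linear_sum; apply: eq_bigr => i _.
by rewrite -!scalerAl linearZ /= recip_XnM // -ltnS.
Qed.

End Reciprocal.

Section Irreducible.
Variable R : fieldType.
Implicit Types p q : {poly R}.

Lemma irredp_recip m p :
  irreducible_poly p -> size p = m.+1 -> p`_0 != 0 -> irreducible_poly (recip m p).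
Proof.
move=> irr sp p0; split; first by rewrite size_recip // -sp; case: irr.
move=> q sq_ne1 /dvdpP [r rq].
have recip_nz : recip m p != 0 by rewrite -size_poly_gt0 size_recip.
have r_nz : r != 0 by apply: contraNneq recip_nz => r0; rewrite rq r0 mul0r.
have q_nz : q != 0 by apply: contraNneq recip_nz => q0; rewrite rq q0 mulr0.
have sr : size r = (size r).-1.+1 by rewrite prednK // size_poly_gt0.
have sq : size q = (size q).-1.+1 by rewrite prednK // size_poly_gt0.
set a := (size r).-1 in sr; set b := (size q).-1 in sq.
have m_ab : m = (a + b)%N.
  by have := size_mul r_nz q_nz; rewrite -rq size_recip // sr sq; lia.
have pE : p = recip a r * recip b q.
  by rewrite -recipM ?sr ?sq // -rq -m_ab recipK // sp.
have q0 : q`_0 != 0.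
  have : (recip m p)`_0 != 0 by rewrite coef0_recip // lead_coef_eq0 -size_poly_gt0 sp.
  by rewrite rq coef0M; apply: contra => /eqP ->; rewrite mulr0.
have /(irredp_XsubCP irr) [|] : recip b q %| p by rewrite pE dvdp_mulIr.
  by move/eqp_size; rewrite size_recip // size_poly1 => -[b0]; rewrite sq b0 in sq_ne1.
move/eqp_size; rewrite size_recip // sp => -[m_b].
have r_const : r = (r`_0)%:P by apply: size1_polyC; rewrite sr; lia.
have r0 : r`_0 != 0 by apply: contraNneq r_nz => r0; rewrite r_const r0.
by rewrite rq r_const mul_polyC eqp_sym eqp_scale.
Qed.

Lemma irredp_comp_XaddC c p :
  irreducible_poly p -> irreducible_poly (p \Po ('X + c%:P)).
Proof.
have comp_XsubC_K q : (q \Po ('X - c%:P)) \Po ('X + c%:P) = q.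
  by have := comp_polyXaddC_K q (- c); rewrite polyCN opprK.
move=> irr; split; first by rewrite size_comp_poly2 ?size_XaddC; case: irr.
move=> q sq dvd_qp.
have : q \Po ('X - c%:P) %= p.
  apply: irr; first by rewrite size_comp_poly2 ?size_XsubC.
  by rewrite -[p](comp_polyXaddC_K _ c) dvdp_comp_poly.
by case/andP => qp pq; rewrite /eqp -[q]comp_XsubC_K !dvdp_comp_poly.
Qed.

Lemma irredp_rootN p x : irreducible_poly p -> (2 < size p)%N -> ~~ root p x.
Proof.
move=> irr sp; apply/negP; rewrite root_factor_theorem => dvd_Xx.
have /irr/(_ dvd_Xx)/eqp_size : size ('X - x%:P) != 1 by rewrite size_XsubC.
by rewrite size_XsubC => s2; rewrite -s2 in sp.
Qed.

End Irreducible.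

Section TranslateByOne.
Variable R : comNzRingType.
Implicit Types p : {poly R}.

Lemma XaddC1_expE k : ('X + 1 : {poly R}) ^+ k = \poly_(i < k.+1) 'C(k, i)%:R.
Proof.
rewrite exprD1n poly_def; apply: eq_bigr => i _.
by rewrite (scaler_nat (R := R)).
Qed.

Lemma coef_XaddC1_exp k j : (('X + 1 : {poly R}) ^+ k)`_j = 'C(k, j)%:R.
Proof. by rewrite XaddC1_expE coef_poly; case: ltnP => // /bin_small ->. Qed.

Lemma recip_XaddC1_exp n k : (k <= n)%N ->
  recip n (('X + 1 : {poly R}) ^+ k) = ('X + 1) ^+ k * 'X^(n - k).
Proof.
have palindromic : recip k (('X + 1 : {poly R}) ^+ k) = ('X + 1) ^+ k.
  apply/polyP => j; rewrite coef_recip !coef_XaddC1_exp.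
  by case: leqP => [/bin_sub -> // | /bin_small ->].
have size_exp : (size (('X + 1 : {poly R}) ^+ k) <= k.+1)%N.
  by rewrite XaddC1_expE size_poly.
move=> kn; have := recip_XnM (leq0n (n - k)) size_exp.
by rewrite subnK // mul1r subn0 palindromic mulrC.
Qed.

Lemma coef_comp_XaddC1 n p j : (size p <= n.+1)%N ->
  (p \Po ('X + 1))`_j = \sum_(k < n.+1) p`_k *+ 'C(k, j).
Proof.
move=> sp; rewrite (comp_polyE_wide _ sp) coef_sum; apply: eq_bigr => k _.
by rewrite coefZ coef_XaddC1_exp mulr_natr.
Qed.

Lemma coef_comp_XaddC1_pred n p : (size p <= n.+1)%N ->
  (p \Po ('X + 1))`_n.-1 = p`_n.-1 + p`_n *+ n.
Proof.
case: n => [|n] sp; rewrite (coef_comp_XaddC1 _ sp).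
  by rewrite big_ord1 bin0 mulr0n addr0.
rewrite !big_ord_recr /= big1 => [|k _]; last by rewrite bin_small ?mulr0n.
by rewrite binn binSn add0r.
Qed.

End TranslateByOne.

Lemma mulrn_pchar2 (R : nzRingType) (x : R) m : 2 \in [pchar R] -> x *+ m = x *+ odd m.
Proof.
move=> pchar2; rewrite -{1}(odd_double_half m) mulrnDr -muln2 mulrnA.
by rewrite (mulrn_pchar pchar2) addr0.
Qed.

Lemma pchar_F2 : 2 \in [pchar 'F_2].
Proof. exact: pchar_Fp. Qed.

Lemma F2_neq0 (x : 'F_2) : x != 0 -> x = 1.
Proof. by case: x => -[|[|//]] ? //= _; apply/val_inj. Qed.

Lemma monic_F2 (p : {poly 'F_2}) : p != 0 -> p \is monic.
Proof. by move=> p_nz; apply/monicP/F2_neq0; rewrite lead_coef_eq0. Qed.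

Implicit Types f : {poly 'F_2}.

Lemma psiE n f : psi n f = recip n f \Po ('X + 1).
Proof.
rewrite recipE linear_sum; apply: eq_bigr => k _.
by rewrite linearZ /= rmorphXn /= comp_polyX.
Qed.

Lemma psi_invE n f : (size f <= n.+1)%N -> psi_inv n f = recip n (f \Po ('X + 1)).
Proof.
move=> sf; rewrite (comp_polyE_wide _ sf) linear_sum; apply: eq_bigr => k _.
by rewrite linearZ /= recip_XaddC1_exp // -ltnS.
Qed.

Lemma irredn_horner n f x : (1 < n)%N -> irredn n f -> f.[x] = 1.
Proof.
move=> n_gt1 [irr sf _]; apply: F2_neq0.
by have := irredp_rootN x irr; rewrite sf ltnS; apply.
Qed.

Lemma irredn_psi n f : (1 < n)%N -> irredn n f -> irredn n (psi n f).
Proof.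
move=> n_gt1 irr_f; have f0 : f`_0 != 0.
  by rewrite -horner_coef0 (irredn_horner 0 n_gt1 irr_f) oner_neq0.
case: irr_f => irr sf _.
have size_psi : size (psi n f) = n.+1.
  by rewrite psiE size_comp_poly2 ?size_recip // -polyC1 size_XaddC.
split=> //; last by rewrite monic_F2 // -size_poly_gt0 size_psi.
by rewrite psiE -polyC1; apply/irredp_comp_XaddC/irredp_recip.
Qed.

Lemma irredn_psi_inv n f : (1 < n)%N -> irredn n f -> irredn n (psi_inv n f).
Proof.
move=> n_gt1 irr_f; have f1 : (f \Po ('X + 1))`_0 != 0.
  by rewrite -horner_coef0 horner_comp !hornerE (irredn_horner _ n_gt1 irr_f) oner_neq0.
case: irr_f => irr sf _.
have size_comp : size (f \Po ('X + 1)) = n.+1.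
  by rewrite size_comp_poly2 // -polyC1 size_XaddC.
have size_psi_inv : size (psi_inv n f) = n.+1.
  by rewrite psi_invE ?sf // size_recip.
split=> //; last by rewrite monic_F2 // -size_poly_gt0 size_psi_inv.
rewrite psi_invE ?sf //; apply: irredp_recip => //.
by rewrite -polyC1; apply: irredp_comp_XaddC.
Qed.

Lemma sum_coefMn n f : (3 <= n)%N -> odd n -> f`_n = 1 ->
  \sum_(k < n.+1) f`_k *+ k = f`_1 + sigma n f + 1.
Proof.
case: n => [|[|[|m]]] // _ odd_n fn; rewrite oddS in odd_n.
rewrite -(big_mkord xpredT (fun k => f`_k *+ k)) /sigma /=.
rewrite big_ltn // big_ltn // big_nat_recr // big_nat_recr //= fn.
rewrite mulr0n add0r mulr1n (mulrn_pchar2 _ m.+2 pchar_F2) (negPf odd_n).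
by rewrite (mulrn_pchar2 _ m.+3 pchar_F2) oddS odd_n addr0 addrA.
Qed.

Section PsiCoefficients.
Variables (n : nat) (f : {poly 'F_2}).
Hypotheses (n_ge3 : (3 <= n)%N) (odd_n : odd n) (irr_f : irredn n f).

Let n_gt1 : (1 < n)%N := ltnW n_ge3.

Let n_sub_pred : (n - n.-1 = 1)%N. Proof. by lia. Qed.

Let size_f : size f = n.+1. Proof. by case: irr_f. Qed.

Let coef_top : f`_n = 1.
Proof. by case: irr_f => _ sf /monicP; rewrite lead_coefE sf. Qed.

Let coef0 : f`_0 = 1.
Proof. by rewrite -horner_coef0 (irredn_horner 0 n_gt1 irr_f). Qed.

Let sum_coef : \sum_(k < n.+1) f`_k = 1.
Proof.
rewrite -(irredn_horner 1 n_gt1 irr_f) (horner_coef_wide 1 (eq_leq size_f)).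
by apply: eq_bigr => k _; rewrite expr1n mulr1.
Qed.

Let mulrn_n (x : 'F_2) : x *+ n = x.
Proof. by rewrite (mulrn_pchar2 _ _ pchar_F2) odd_n. Qed.

Lemma coef_psi_pred : (psi n f)`_n.-1 = f`_1 + 1.
Proof.
rewrite psiE coef_comp_XaddC1_pred ?size_recip_leq // !coef_recip leq_pred leqnn.
by rewrite subnn n_sub_pred coef0 mulrn_n.
Qed.

Lemma coef_psi1 : (psi n f)`_1 = f`_1 + sigma n f.
Proof.
rewrite psiE (coef_comp_XaddC1 _ (size_recip_leq _ _)).
under eq_bigr => k _ do rewrite bin1 coef_recip -ltnS ltn_ord.
rewrite (reindex_inj rev_ord_inj) /=.
under eq_bigr => k _.
  rewrite subSS subKn ?leq_ord // mulrnBr ?leq_ord // mulrn_n (GRing.subr_pchar2 pchar_F2).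
  over.
rewrite big_split /= sum_coefMn // sum_coef.
by rewrite addrC -addrA (addrr_pchar2 pchar_F2) addr0.
Qed.

Lemma coef_psi_inv_pred : (psi_inv n f)`_n.-1 = f`_1 + sigma n f + 1.
Proof.
rewrite psi_invE ?size_f // coef_recip leq_pred n_sub_pred.
rewrite (coef_comp_XaddC1 _ (eq_leq size_f)).
under eq_bigr => k _ do rewrite bin1.
exact: sum_coefMn.
Qed.

Lemma coef_psi_inv1 : (psi_inv n f)`_1 = f`_n.-1 + 1.
Proof.
rewrite psi_invE ?size_f // coef_recip ltnW // subn1.
by rewrite coef_comp_XaddC1_pred ?size_f // coef_top mulrn_n.
Qed.

End PsiCoefficients.

Theorem lemma1 (n : nat) (f g : {poly 'F_2}) :
  (3 <= n)%N -> odd n -> S_ij 1 1 n f -> S_ij 0 0 n g ->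
  [/\ (sigma n f = 1 -> S_ij 0 0 n (psi n f)) /\
      (sigma n f = 0 -> S_ij 0 1 n (psi n f)),
      (sigma n f = 0 -> S_ij 0 0 n (psi_inv n f)) /\
      (sigma n f = 1 -> S_ij 1 0 n (psi_inv n f)),
      (sigma n g = 1 -> S_ij 1 1 n (psi n g)) /\
      (sigma n g = 0 -> S_ij 1 0 n (psi n g)) &
      (sigma n g = 0 -> S_ij 1 1 n (psi_inv n g)) /\
      (sigma n g = 1 -> S_ij 0 1 n (psi_inv n g))].
Proof.
move=> n_ge3 odd_n [irr_f [f_top f_1]] [irr_g [g_top g_1]].
have n_gt1 : (1 < n)%N := ltnW n_ge3.
have [Pf Qf] := (irredn_psi n_gt1 irr_f, irredn_psi_inv n_gt1 irr_f).
have [Pg Qg] := (irredn_psi n_gt1 irr_g, irredn_psi_inv n_gt1 irr_g).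
rewrite /S_ij !(coef_psi_pred n_ge3 odd_n, coef_psi1 n_ge3 odd_n) //.
rewrite !(coef_psi_inv_pred n_ge3 odd_n, coef_psi_inv1 n_ge3 odd_n) //.
rewrite f_top f_1 g_top g_1.
by split; split=> ->; rewrite ?(addr0, add0r, addrr_pchar2 pchar_F2).
Qed.
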